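(* Let $n\le l$ be positive integers, let $L_l=\{a_1<\dots<a_l\}$ be the linearly ordered semilattice of $l$ elements, and let $t(X)=s(X)$ be an equation over $L_l$ in the variables $X=\{x_1,\dots,x_n\}$ in which every variable occurs. If $\sigma\ne\sigma'$ are two distinct permutations of $\{1,\dots,n\}$, each of the first or second kind with respect to $t(X)=s(X)$, then $Y_\sigma\not\subseteq Y_{\sigma'}$.
   Context: $L_l$ has multiplication $a_ia_j=a_{\min(i,j)}$. A term is a commutative word in $x_1,\dots,x_n$; $\mathrm{Var}(t)$ is the set of variables occurring in $t$. An equation is an ordered pair of terms $t(X)=s(X)$; $P\in L_l^n$ is a solution if $t(P)=s(P)$; $x\le y$ abbreviates $xy=x$. For a system $S$, $V(S)\subseteq L_l^n$ is its set of common solutions. A permutation $\sigma$ of $\{1,\dots,n\}$ is of the first kind if $x_{\sigma(1)}\in\mathrm{Var}(t)\cap\mathrm{Var}(s)$, and of the second kind if $x_{\sigma(1)}\in\mathrm{Var}(s)\setminus\mathrm{Var}(t)$ and $x_{\sigma(2)}\in\mathrm{Var}(t)\setminus\mathrm{Var}(s)$. For $\sigma$ of the first kind, $Y_\sigma=V(\{x_{\sigma(i)}\le x_{\sigma(i+1)}:1\le i\le n-1\})$; for $\sigma$ of the second kind, $Y_\sigma=V(\{x_{\sigma(1)}=x_{\sigma(2)}\}\cup\{x_{\sigma(i)}\le x_{\sigma(i+1)}:2\le i\le n-1\})$. *)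

From mathcomp Require Import all_boot all_order all_fingroup.
Set Implicit Arguments. Unset Strict Implicit. Unset Printing Implicit Defensive.

(* L_l = {a_1 < ... < a_l} is modelled by 'I_l (a_{i+1} <-> i), with
   multiplication a_i a_j = a_{min(i,j)}. *)
Definition Lmul (l : nat) (a b : 'I_l) : 'I_l := if (val a <= val b)%N then a else b.

(* A term: a (nonempty) commutative word in x_1..x_n (variable x_{i+1} <-> i : 'I_n),
   given as its first letter and the remaining letters. *)
Definition term (n : nat) : Type := ('I_n * seq 'I_n)%type.

Definition Var (n : nat) (t : term n) : {set 'I_n} := [set i | i \in t.1 :: t.2].

Definition tval (n l : nat) (P : {ffun 'I_n -> 'I_l}) (t : term n) : 'I_l :=
  foldl (@Lmul l) (P t.1) (map P t.2).

Definition equation (n : nat) : Type := (term n * term n)%type.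

Definition V (n l : nat) (S : seq (equation n)) : {set {ffun 'I_n -> 'I_l}} :=
  [set P | all (fun e : equation n => tval P e.1 == tval P e.2) S].

(* Equations x_i = x_j and x_i <= x_j (i.e. x_i x_j = x_i). *)
Definition eq_var (n : nat) (i j : 'I_n) : equation n := ((i, [::]), (j, [::])).
Definition le_var (n : nat) (i j : 'I_n) : equation n := ((i, [:: j]), (i, [::])).

(* Positions are 0-based: position k stands for the paper's index k+1. *)
Definition first_kind (n : nat) (t s : term n) (sg : {perm 'I_n}) : bool :=
  [exists i : 'I_n, (val i == 0%N) && (sg i \in Var t :&: Var s)].

Definition second_kind (n : nat) (t s : term n) (sg : {perm 'I_n}) : bool :=
  [exists i : 'I_n, exists j : 'I_n,
     [&& val i == 0%N, val j == 1%N, sg i \in Var s :\: Var t & sg j \in Var t :\: Var s]].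

(* {x_{sg(i)} <= x_{sg(i+1)} : start <= i <= n-1} (paper indices), i.e. 0-based
   positions p with start-1 <= p and p+1 < n. *)
Definition chain_sys (n : nat) (sg : {perm 'I_n}) (start : nat) : seq (equation n) :=
  flatten [seq [seq le_var (sg p) (sg q) | q <- enum 'I_n & val q == (val p).+1]
          | p <- enum 'I_n & (start <= (val p).+1)%N].

Definition Y1 (n l : nat) (sg : {perm 'I_n}) : {set {ffun 'I_n -> 'I_l}} :=
  V l (chain_sys sg 1).

Definition Y2 (n l : nat) (sg : {perm 'I_n}) : {set {ffun 'I_n -> 'I_l}} :=
  V l (flatten [seq [seq eq_var (sg p) (sg q) | q <- enum 'I_n & val q == 1%N]
               | p <- enum 'I_n & val p == 0%N] ++ chain_sys sg 2).

(* Y_sigma: Y1 for permutations of the first kind, Y2 otherwise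
   (used only for permutations of the first or second kind). *)
Definition Ysig (n l : nat) (t s : term n) (sg : {perm 'I_n}) : {set {ffun 'I_n -> 'I_l}} :=
  if first_kind t s sg then Y1 l sg else Y2 l sg.

From Pilot Require Import Defs.
From mathcomp Require Import all_boot all_order all_fingroup.
Set Implicit Arguments. Unset Strict Implicit. Unset Printing Implicit Defensive.

(* For sigma of the first kind, Y_sigma contains the point that ranks the
   variables along sigma (x_sigma(k) = a_k); for sigma of the second kind, it
   contains the point obtained from it by merging the two lowest ranks.  A
   point lies in Y_sigma' only if its values are monotone along sigma'.  For
   the ranking point this forces sigma' = sigma, and it cannot satisfy the
   equation x_sigma'(1) = x_sigma'(2) since it is injective.  For the merged
   point, monotonicity puts x_sigma'(1) among x_sigma(1), x_sigma(2); the kinds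
   leave only sigma'(1) = sigma(1), and then monotonicity again forces
   sigma' = sigma. *)

Lemma all_flatten_enum (T : finType) (E : eqType) (A : pred T) (B : rel T)
    (a : pred E) (f : T -> T -> E) :
  all a (flatten [seq [seq f p q | q <- enum T & B p q] | p <- enum T & A p]) =
  [forall p, forall q, A p && B p q ==> a (f p q)].
Proof.
apply/allP/forallP => [a_all p | a_all e /flattenP[_ /mapP[p + ->] /mapP[q + ->]]].
  apply/forallP => q; apply/implyP => /andP[Ap Bpq]; apply/a_all/flattenP.
  exists [seq f p q | q <- enum T & B p q].
    by apply/mapP; exists p; rewrite // mem_filter mem_enum Ap.
  by apply/mapP; exists q; rewrite // mem_filter mem_enum Bpq.
rewrite !mem_filter => /andP[Ap _] /andP[Bpq _].
by have /forallP/(_ q)/implyP := a_all p; apply; rewrite Ap Bpq.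
Qed.

Lemma homo_ord_succ n (h : 'I_n -> nat) :
  (forall i j : 'I_n, j = i.+1 :> nat -> h i <= h j) -> {homo h : i j / i <= j}.
Proof.
case: n h => [|n] h h_succ i j; first by case: i.
have D_convex : {in [pred k | k < n.+1] &, forall x y z, x < z < y -> z < n.+1}.
  by move=> x y _ /= y_lt z /andP[_ /ltn_trans]; apply.
have h_succ' :
    {in [pred k | k < n.+1], forall k, k.+1 < n.+1 -> h (inord k) <= h (inord k.+1)}.
  by move=> k /= k_lt k1_lt; apply: h_succ; rewrite !inordK.
have := homo_leq_in leqnn leq_trans D_convex h_succ' (ltn_ord i) (ltn_ord j).
by rewrite !inord_val.
Qed.

Lemma perm_homo_id n (f : {perm 'I_n}) : {homo f : i j / i <= j} -> f = 1%g.
Proof.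
move=> f_homo; apply/permP => i; rewrite perm1.
have enum_sorted : sorted (fun i j : 'I_n => i <= j) (enum 'I_n).
  by have := iota_sorted 0 n; rewrite -val_enum_ord sorted_map.
suff /eq_in_map/(_ i) : map f (enum 'I_n) = map id (enum 'I_n) by rewrite mem_enum; apply.
have le_ord_trans : transitive (fun i j : 'I_n => i <= j) by move=> ? ? ?; apply: leq_trans.
have le_ord_anti : antisymmetric (fun i j : 'I_n => i <= j).
  by move=> x y /andP[xy yx]; apply/val_inj/eqP; rewrite eqn_leq xy.
have map_sorted : sorted (fun i j : 'I_n => i <= j) (map f (enum 'I_n)).
  exact: homo_sorted enum_sorted.
rewrite map_id; apply: (sorted_eq le_ord_trans le_ord_anti map_sorted enum_sorted).
apply: uniq_perm; rewrite ?(map_inj_uniq (@perm_inj _ f)) ?enum_uniq //.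
by move=> j; rewrite mem_enum; apply/mapP; exists ((f^-1)%g j); rewrite ?mem_enum ?permKV.
Qed.

Section Solutions.
Variables n l : nat.
Implicit Types (P : {ffun 'I_n -> 'I_l}) (sg : {perm 'I_n}).

(* Plain [tval] would be the tuple projection. *)
Definition holds P (e : equation n) : bool := Defs.tval P e.1 == Defs.tval P e.2.

Lemma holds_le_var P i j : holds P (le_var i j) = (P i <= P j).
Proof. by rewrite /holds /Defs.tval /= /Lmul; case: leqP => [|/ltn_eqF]; rewrite ?eqxx. Qed.

Lemma holds_eq_var P i j : holds P (eq_var i j) = (P i == P j).
Proof. by []. Qed.

Lemma all_holds_chain_sys P sg st :
  all (holds P) (chain_sys sg st) =
  [forall p : 'I_n, forall q : 'I_n,
     (st <= p.+1) && (q == p.+1 :> nat) ==> (P (sg p) <= P (sg q))].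
Proof.
rewrite all_flatten_enum; apply: eq_forallb => p; apply: eq_forallb => q.
by rewrite holds_le_var.
Qed.

Lemma Y1P P sg :
  reflect {homo (fun i => nat_of_ord (P (sg i))) : i j / i <= j} (P \in Y1 l sg).
Proof.
rewrite inE -/(holds P) all_holds_chain_sys; apply: (iffP forallP) => [steps | homo p].
  apply: homo_ord_succ => p q qp.
  by move/forallP: (steps p) => /(_ q)/implyP; apply; rewrite qp eqxx.
by apply/forallP => q; apply/implyP => /andP[_ /eqP qp]; apply: homo; rewrite qp.
Qed.

Lemma Y2P P sg :
  reflect ((forall i j : 'I_n, i = 0 :> nat -> j = 1 :> nat -> P (sg i) = P (sg j)) /\
           (forall p q : 'I_n, 0 < p -> q = p.+1 :> nat -> P (sg p) <= P (sg q)))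
          (P \in Y2 l sg).
Proof.
rewrite inE -/(holds P) all_cat all_flatten_enum all_holds_chain_sys.
apply: (iffP andP) => -[eqs steps]; split.
- move=> i j i0 j1; apply/eqP.
  by move/forallP/(_ i)/forallP/(_ j)/implyP: eqs; apply; rewrite /= i0 j1.
- move=> p q p_gt0 qp.
  by move/forallP/(_ p)/forallP/(_ q)/implyP: steps; apply; rewrite qp ltnS p_gt0 eqxx.
- apply/forallP => i; apply/forallP => j; apply/implyP => /andP[/eqP i0 /eqP j1].
  by rewrite holds_eq_var (eqs i j i0 j1).
- apply/forallP => p; apply/forallP => q; apply/implyP => /andP[p_gt0 /eqP qp].
  exact: steps.
Qed.

Lemma Y2_sub_Y1 sg : Y2 l sg \subset Y1 l sg.
Proof.
apply/subsetP => P /Y2P[eqs steps]; apply/Y1P/homo_ord_succ => p q qp.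
have [p0 | p_gt0] := posnP p; last exact: steps.
by rewrite (eqs p q) // qp p0.
Qed.

Hypothesis nl : n <= l.

Definition strict_chain_pt sg : {ffun 'I_n -> 'I_l} := [ffun x => widen_ord nl ((sg^-1)%g x)].

Definition merged_chain_pt sg : {ffun 'I_n -> 'I_l} :=
  [ffun x => Ordinal (leq_ltn_trans (leq_pred _) (ltn_ord (strict_chain_pt sg x)))].

Lemma strict_chain_ptE sg x : strict_chain_pt sg x = (sg^-1)%g x :> nat.
Proof. by rewrite ffunE. Qed.

Lemma merged_chain_ptE sg x : merged_chain_pt sg x = ((sg^-1)%g x).-1 :> nat.
Proof. by rewrite ffunE /= strict_chain_ptE. Qed.

Lemma strict_chain_pt_inj sg : injective (strict_chain_pt sg).
Proof. by move=> x y /(congr1 val); rewrite /= !strict_chain_ptE => /val_inj/perm_inj. Qed.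

Lemma strict_chain_pt_Y1 sg : strict_chain_pt sg \in Y1 l sg.
Proof. by apply/Y1P => i j; rewrite /= !strict_chain_ptE !permK. Qed.

Lemma merged_chain_pt_Y2 sg : merged_chain_pt sg \in Y2 l sg.
Proof.
apply/Y2P; split => [i j i0 j1 | p q _ qp].
  by apply/val_inj; rewrite /= !merged_chain_ptE !permK i0 j1.
by rewrite !merged_chain_ptE !permK qp leq_pred.
Qed.

Lemma strict_chain_pt_Y1_eq sg sg' : strict_chain_pt sg \in Y1 l sg' -> sg' = sg.
Proof.
move/Y1P => homo; apply/eqP; rewrite eq_mulgV1; apply/eqP/perm_homo_id => i j ij.
by have := homo i j ij; rewrite /= !strict_chain_ptE !permM.
Qed.

Lemma strict_chain_pt_notin_Y2 sg sg' (i0 i1 : 'I_n) :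
  i0 = 0 :> nat -> i1 = 1 :> nat -> strict_chain_pt sg \notin Y2 l sg'.
Proof.
move=> i0_0 i1_1; apply/negP.
case/Y2P=> [/(_ i0 i1 i0_0 i1_1)/strict_chain_pt_inj/perm_inj i01 _].
by move: i0_0; rewrite i01 i1_1.
Qed.

Lemma merged_chain_pt_Y1_head sg sg' (i0 i1 : 'I_n) : i0 = 0 :> nat -> i1 = 1 :> nat ->
  merged_chain_pt sg \in Y1 l sg' -> (sg' i0 == sg i0) || (sg' i0 == sg i1).
Proof.
move=> i0_0 i1_1 /Y1P/(_ i0 ((sg'^-1)%g (sg i0))); rewrite i0_0 => /(_ isT).
rewrite /= !merged_chain_ptE permKV permK i0_0 leqn0.
rewrite -[sg' i0](permKV sg) !(inj_eq (@perm_inj _ sg)) -!val_eqE /= i0_0 i1_1.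
by rewrite permK; case: (nat_of_ord _) => [|[|]].
Qed.

Lemma merged_chain_pt_Y1_eq sg sg' (i0 : 'I_n) : i0 = 0 :> nat -> sg' i0 = sg i0 ->
  merged_chain_pt sg \in Y1 l sg' -> sg' = sg.
Proof.
move=> i0_0 head /Y1P homo; set f := (sg' * sg^-1)%g.
have fE x : f x = (sg^-1)%g (sg' x) by rewrite permM.
have f_i0 : f i0 = i0 by rewrite fE head permK.
have f_gt0 x : x != i0 -> 0 < f x.
  move=> x_i0; rewrite lt0n; apply: contra x_i0 => /eqP fx0.
  by rewrite -(inj_eq (@perm_inj _ f)) f_i0 -val_eqE /= fx0 i0_0.
apply/eqP; rewrite eq_mulgV1 -/f; apply/eqP/perm_homo_id/homo_ord_succ => p q qp.
have [->|p_i0] := eqVneq p i0; first by rewrite f_i0 i0_0.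
have q_i0 : q != i0 by rewrite -val_eqE /= qp i0_0.
rewrite -(prednK (f_gt0 _ p_i0)) -(prednK (f_gt0 _ q_i0)) ltnS !fE -!merged_chain_ptE.
by apply: homo; rewrite qp.
Qed.

End Solutions.

Lemma first_kindE n (t s : term n) sg (i0 : 'I_n) :
  i0 = 0 :> nat -> first_kind t s sg = (sg i0 \in Var t :&: Var s).
Proof.
move=> i0_0; apply/existsP/idP => [[i /andP[/eqP i_0]] | sg_i0]; last first.
  by exists i0; rewrite /= i0_0 eqxx.
by rewrite (_ : i = i0) //; apply: val_inj; rewrite /= i_0 i0_0.
Qed.

Lemma Ysig_sub_Y1 n l (t s : term n) sg : Ysig l t s sg \subset Y1 l sg.
Proof. by rewrite /Ysig; case: ifP => _; [apply: subxx | apply: Y2_sub_Y1]. Qed.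

Theorem lemma3 (n l : nat) (t s : term n) (sg sg' : {perm 'I_n}) :
  (0 < n)%N -> (n <= l)%N ->
  Var t :|: Var s = [set: 'I_n] ->
  sg != sg' ->
  first_kind t s sg || second_kind t s sg ->
  first_kind t s sg' || second_kind t s sg' ->
  ~~ (Ysig l t s sg \subset Ysig l t s sg').
Proof.
move=> _ nl _ sg_neq kind kind'; apply/negP => /subsetP Ysub.
have [fk | nfk] := boolP (first_kind t s sg).
  have /Ysub : strict_chain_pt nl sg \in Ysig l t s sg by rewrite /Ysig fk strict_chain_pt_Y1.
  rewrite /Ysig; case: ifP => [_ /strict_chain_pt_Y1_eq sg_eq | nfk'].
    by rewrite sg_eq eqxx in sg_neq.
  move: kind'; rewrite nfk' => /existsP[j0 /existsP[j1 /and4P[/eqP j0_0 /eqP j1_1 _ _]]].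
  by rewrite (negbTE (strict_chain_pt_notin_Y2 nl sg sg' j0_0 j1_1)).
move: kind; rewrite (negbTE nfk) => /existsP[i0 /existsP[i1 /and4P[/eqP i0_0 /eqP i1_1 _]]].
move=> /setDP[sg_i1_t sg_i1_s].
have /Ysub/(subsetP (Ysig_sub_Y1 l t s sg')) merged_Y1 : merged_chain_pt nl sg \in Ysig l t s sg.
  by rewrite /Ysig (negbTE nfk) merged_chain_pt_Y2.
have /orP[/eqP head | /eqP head] := merged_chain_pt_Y1_head i0_0 i1_1 merged_Y1.
  by rewrite (merged_chain_pt_Y1_eq i0_0 head merged_Y1) eqxx in sg_neq.
case/orP: kind' => [|/existsP[j0 /existsP[j1 /and4P[/eqP j0_0 _ /setDP[_ sg'_j0_t] _]]]].
  by rewrite (first_kindE _ _ _ i0_0) head => /setIP[_]; rewrite (negbTE sg_i1_s).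
by rewrite (_ : j0 = i0) ?head ?sg_i1_t // in sg'_j0_t; apply: val_inj; rewrite /= j0_0 i0_0.
Qed.
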